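(* Let $H$ be a graph. Then there is a full lc-sequence for $H$ if and only if each loopless connected component of $H$ consists of a single isolated vertex.
   Context: Graphs are finite, may have loops, but no multiple edges; an edge is either $\{u\}$ (a loop at $u$) or $\{u,w\}$ with $u\ne w$. A vertex is isolated if no edge (including a loop) is incident to it. A graph is loopless if no vertex is looped. For $v\in V(H)$, $N_H(v)=\{u\in V(H): u\neq v,\ \{u,v\}\in E(H)\}$. For a looped vertex $v$, the local complement $H*v$ is the graph on $V(H)$ such that for every $p\subseteq V(H)$ with $|p|\in\{1,2\}$: $p\in E(H*v)$ iff either ($p\notin E(H)$ and $p\subseteq N_H(v)$) or ($p\in E(H)$ and $p\not\subseteq N_H(v)$). $H*_c v$ (defined only when $v$ is looped) is obtained from $H*v$ by removing all edges incident to $v$, including its loop. For mutually distinct vertices $v_1,\dots,v_k$, the sequence $\varphi=*_c v_1 *_c v_2\cdots *_c v_k$ (applied left to right) is an lc-sequence for $H$ if each operation is applicable, i.e. $v_i$ is looped in $H*_c v_1\cdots *_c v_{i-1}$ for all $i$. It is full if the resulting graph $H\varphi$ consists only of isolated vertices. *)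

From mathcomp Require Import all_boot.
Set Implicit Arguments. Unset Strict Implicit. Unset Printing Implicit Defensive.

(* A graph on the finite vertex type V (loops allowed, no multiple edges) is
   represented by its adjacency relation H : rel V, required to be symmetric:
   H u w (u <> w) means the edge {u,w} is present, H u u means u is looped. *)
Definition graph_sym (V : finType) (H : rel V) : Prop := forall u w, H u w = H w u.

Definition looped (V : finType) (H : rel V) (v : V) : bool := H v v.

Definition isolated (V : finType) (H : rel V) (v : V) : bool := [forall u, ~~ H v u].

Definition nbhd (V : finType) (H : rel V) (v : V) : pred V :=
  fun u => (u != v) && H u v.

(* local complement H * v : the pair p = {u,w} (|p| in {1,2}) is an edge of
   H * v iff exactly one of "p in E(H)" and "p subset N_H(v)" holds. *)
Definition lc (V : finType) (H : rel V) (v : V) : rel V :=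
  fun u w => xorb (H u w) (nbhd H v u && nbhd H v w).

Definition lcc (V : finType) (H : rel V) (v : V) : rel V :=
  fun u w => [&& u != v, w != v & lc H v u w].

Definition apply_seq (V : finType) (H : rel V) (s : seq V) : rel V :=
  foldl (@lcc V) H s.

Fixpoint applicable (V : finType) (H : rel V) (s : seq V) : bool :=
  match s with
  | [::] => true
  | v :: s' => looped H v && applicable (lcc H v) s'
  end.

Definition lc_sequence (V : finType) (H : rel V) (s : seq V) : bool :=
  uniq s && applicable H s.

Definition full_lc_sequence (V : finType) (H : rel V) (s : seq V) : bool :=
  lc_sequence H s && [forall u, isolated (apply_seq H s) u].

Definition component (V : finType) (H : rel V) (v : V) : pred V := connect H v.

Definition loopless_component (V : finType) (H : rel V) (v : V) : Prop :=
  forall u, component H v u -> ~~ looped H u.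

From mathcomp Require Import all_boot.
Set Implicit Arguments. Unset Strict Implicit. Unset Printing Implicit Defensive.

(* Pivots are looped, so a pivot never lies in, nor is adjacent to, a loopless
   component; such a component is therefore left untouched by every [*_c] step,
   and if the final graph is edgeless the component was a single isolated
   vertex.  Conversely, call [G] admissible when its loopless components are
   isolated vertices.  Pivoting on a looped vertex [w] that maximizes [score]
   keeps [G] admissible and isolates [w] while never un-isolating a vertex, so
   induction on the number of non-isolated vertices yields a full sequence. *)

Section LocalComplementation.
Variable V : finType.
Implicit Types (G : rel V) (s : seq V).

Lemma graph_sym_lcc G w : graph_sym G -> graph_sym (lcc G w).
Proof.
move=> Gsym u z; rewrite /lcc /lc (Gsym u z) [nbhd G w u && _]andbC.
by case: (u != w); case: (z != w).
Qed.

Lemma isolated_lcc G w x : isolated G x -> isolated (lcc G w) x.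
Proof.
move=> /forallP isox; apply/forallP=> u.
rewrite /lcc /lc /nbhd (negbTE (isox u)) (negbTE (isox w)) /=.
by case: (x != w); case: (u != w).
Qed.

Lemma isolated_lcc_pivot G w : isolated (lcc G w) w.
Proof. by apply/forallP => u; rewrite /lcc eqxx. Qed.

Lemma lcc_nonadjacent G w x y : x != w -> ~~ G x w -> lcc G w x y = G x y.
Proof.
move=> xw Gxw; rewrite /lcc /lc /nbhd xw (negbTE Gxw) /=.
by case: eqVneq => [->|_] /=; [rewrite (negbTE Gxw) | case: (G x y)].
Qed.

Lemma connect_neq_edge G a b : connect G a b -> a != b -> exists y, G a y.
Proof.
move=> /connectP[[|y p] /= Gp ->]; first by rewrite eqxx.
by case/andP: Gp => Gay _; exists y.
Qed.

Lemma isolated_component G v u : isolated G v -> component G v u -> u = v.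
Proof.
move=> isov Cvu; apply/eqP; rewrite eq_sym; apply/negP => /negP vu.
have [y Gvy] := connect_neq_edge Cvu vu.
by move/forallP: isov => /(_ y); rewrite Gvy.
Qed.

Lemma applicable_not_isolated s G x :
  applicable G s -> x \in s -> ~~ isolated G x.
Proof.
elim: s G => [|w s IHs] G //= /andP[Gww apps]; rewrite in_cons.
case/orP => [/eqP->|xs].
  by apply/negP => /forallP /(_ w); rewrite /looped in Gww; rewrite Gww.
by apply: contra (IHs _ apps xs); apply: isolated_lcc.
Qed.

Lemma apply_seq_loopless_component H v s G :
  loopless_component H v ->
  (forall x y, component H v x -> G x y = H x y) -> applicable G s ->
  forall x y, component H v x -> apply_seq G s x y = H x y.
Proof.
move=> loopless; elim: s G => [|w s IHs] G GH //= /andP[Gww apps].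
apply: IHs apps => x y Cvx.
have Cvw : ~~ component H v w.
  apply/negP => Cvw; move: (loopless _ Cvw).
  by rewrite /looped -GH // => /negP[].
have Hxw : ~~ H x w.
  by apply: contra Cvw => Hxw; apply: connect_trans Cvx (connect1 Hxw).
have xw : x != w by apply: contraNneq Cvw => <-.
by rewrite lcc_nonadjacent ?GH // GH.
Qed.

Lemma full_lc_sequence_isolated H s v :
  full_lc_sequence H s -> loopless_component H v -> isolated H v.
Proof.
case/andP => /andP[_ apps] /forallP isofinal loopless.
apply/forallP => u; rewrite -(@apply_seq_loopless_component H v s H) //.
exact: (forallP (isofinal v) u).
Qed.

Definition admissible G := forall v, loopless_component G v -> isolated G v.

Definition weight G x y : nat := if G x y then (if G y y then 0 else 2) else 1.

Definition score G x : nat := \sum_y weight G x y.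

Lemma weight_lcc_pivot G w x y :
  graph_sym G -> G w w -> x != w -> G x w -> G x x ->
  (lcc G w x y -> ~~ lcc G w y y) ->
  weight G w y <= weight G x y ?= iff ~~ lcc G w x y.
Proof.
move=> Gsym Gww xw Gxw Gxx unloopedy; apply/leqifP; rewrite /weight.
case: (eqVneq y w) => [->|yw]; first by rewrite /lcc eqxx /= andbF Gww Gxw.
case: (eqVneq y x) => [->|yx].
  by rewrite (Gsym w x) Gxw Gxx /lcc /lc /nbhd xw Gxw Gxx.
move: unloopedy; rewrite /lcc /lc /nbhd xw yw Gxw (Gsym y w) /=.
by case: (G x y); case: (G w y); case: (G y y) => //= /(_ isT).
Qed.

(* The hypotheses describe a neighbour [x] of the pivot lying in a nontrivial
   loopless component of [G *_c w]; this is the configuration that a pivot of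
   maximal score rules out. *)
Lemma score_lt_lcc_pivot G w x y0 :
  graph_sym G -> G w w -> x != w -> G x w -> G x x ->
  (forall y, lcc G w x y -> ~~ lcc G w y y) -> lcc G w x y0 ->
  score G w < score G x.
Proof.
move=> Gsym Gww xw Gxw Gxx unlooped Gxy0.
have le_wx y := @weight_lcc_pivot G w x y Gsym Gww xw Gxw Gxx (unlooped y).
rewrite /score (bigD1 y0) //= [X in _ < X](bigD1 y0) //= -addSn.
apply: leq_add; first by rewrite ltn_neqAle (le_wx y0).1 (le_wx y0).2 Gxy0.
by apply: leq_sum => y _; rewrite (le_wx y).1.
Qed.

Lemma component_lcc_nonadjacent G w v :
  (forall a, component (lcc G w) v a -> (a != w) && ~~ G a w) ->
  forall z, component G v z -> component (lcc G w) v z.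
Proof.
move=> away z /connectP[p]; elim: p v away => [|b p IHp] v away /=.
  by move=> _ ->; apply: connect0.
case/andP => Gvb pathb zlast; have /andP[vw Gvw] := away v (connect0 _ _).
have Cvb : component (lcc G w) v b by apply: connect1; rewrite lcc_nonadjacent.
apply: (connect_trans Cvb); apply: IHp pathb zlast => a Cba.
by apply: away; apply: connect_trans Cvb Cba.
Qed.

Lemma admissible_lcc_max_score G w :
  graph_sym G -> admissible G -> G w w ->
  (forall x, G x x -> score G x <= score G w) -> admissible (lcc G w).
Proof.
move=> Gsym admG Gww maxw v loopless; apply/forallP => u; apply/negP => Gvu.
have Csym : connect_sym (lcc G w) := sym_connect_sym (graph_sym_lcc w Gsym).
have vw : v != w by case/and3P: Gvu.
have [x /andP[Cvx /andP[xw Gxw]] | away] :=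
  pickP [pred x | component (lcc G w) v x && nbhd G w x].
  have Gxx : G x x.
    move: (loopless x Cvx); rewrite /looped /lcc /lc /nbhd xw Gxw /=.
    by case: (G x x).
  have [y0 Gxy0] : exists y, lcc G w x y.
    case: (eqVneq x v) => [->|xv]; first by exists u.
    by apply: (connect_neq_edge (a := x) (b := v)); rewrite // Csym.
  have unlooped y : lcc G w x y -> ~~ lcc G w y y.
    by move=> Gxy; apply: loopless; apply: connect_trans Cvx (connect1 Gxy).
  have := score_lt_lcc_pivot Gsym Gww xw Gxw Gxx unlooped Gxy0.
  by rewrite ltnNge maxw.
(* Otherwise the component of [v] avoids [N_G(w)], so [*_c w] left it unchanged
   and it is already a nontrivial loopless component of [G]. *)
have farw a : component (lcc G w) v a -> (a != w) && ~~ G a w.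
  move=> Cva; have aw : a != w.
    apply: contraTneq Cva => ->; apply/negP; rewrite /component Csym => Cwv.
    have wv : w != v by rewrite eq_sym.
    by have [y] := connect_neq_edge Cwv wv; rewrite /lcc eqxx.
  by move: (away a); rewrite /= Cva /nbhd aw /= => ->.
have looplessG : loopless_component G v.
  move=> z /(component_lcc_nonadjacent farw) Cvz.
  have /andP[zw Gzw] := farw z Cvz.
  by move: (loopless z Cvz); rewrite /looped lcc_nonadjacent.
have /andP[_ Gvw] := farw v (connect0 _ _).
move/forallP: (admG v looplessG) => /(_ u).
by rewrite -(lcc_nonadjacent u vw Gvw) Gvu.
Qed.

Definition non_isolated G := [set v | ~~ isolated G v].

Lemma admissible_full_lc_sequence n G :
  #|non_isolated G| < n -> graph_sym G -> admissible G ->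
  exists s, full_lc_sequence G s.
Proof.
elim: n G => [|n IHn] G // sizeG Gsym admG.
have [w0 Gw0w0 | noloop] := pickP (fun w => G w w); last first.
  exists [::]; rewrite /full_lc_sequence /lc_sequence /=.
  by apply/forallP => v; apply: admG => u _; rewrite /looped noloop.
have [w Gww maxw] := @arg_maxnP _ w0 (fun w => G w w) (score G) Gw0w0.
have shrink : #|non_isolated (lcc G w)| < #|non_isolated G|.
  apply: proper_card; apply/properP; split.
    by apply/subsetP => x; rewrite !inE; apply: contra; apply: isolated_lcc.
  exists w; rewrite !inE ?isolated_lcc_pivot //.
  by apply/negP => /forallP /(_ w); rewrite Gww.
have [s /andP[/andP[uniqs apps] isos]] :=
  IHn _ (leq_trans shrink sizeG) (graph_sym_lcc w Gsym)
    (admissible_lcc_max_score Gsym admG Gww maxw).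
exists (w :: s); rewrite /full_lc_sequence /lc_sequence /= uniqs apps isos.
rewrite /looped Gww !andbT; apply/negP => ws.
by move: (applicable_not_isolated apps ws); rewrite isolated_lcc_pivot.
Qed.

End LocalComplementation.

Theorem mainTheorem6 (V : finType) (H : rel V) (Hsym : graph_sym H) :
  (exists s : seq V, full_lc_sequence H s) <->
  (forall v : V, loopless_component H v ->
     (forall u, component H v u -> u = v) /\ isolated H v).
Proof.
split.
  move=> [s fulls] v loopless.
  have isov := full_lc_sequence_isolated fulls loopless.
  by split=> // u; apply: isolated_component.
move=> trivial_loopless.
apply: (@admissible_full_lc_sequence _ #|non_isolated H|.+1) => // v loopless.
exact: (trivial_loopless v loopless).2.
Qed.
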